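(* Let $n\ge1$ and let $X$ be a lazy simple random walk on the cycle $\mathbb{Z}_n=\{0,1,\dots,n-1\}$. Then for every $\alpha\in(0,1)$, \[ t_{\mathrm{H}}(\alpha)=t_{\mathrm{mov}}(\alpha). \]
   Context: The lazy simple random walk on $\mathbb{Z}_n$ stays put with probability $1/2$ and otherwise moves to $x+1$ or $x-1$ (mod $n$) with probability $1/4$ each; $\pi$ denotes its stationary (uniform) distribution. For a set $A$, $\tau_A=\inf\{t\ge0:X_t\in A\}$ and $t_{\mathrm{H}}(\alpha)=\max_{x,\,A:\pi(A)\ge\alpha}\mathbb{E}_x[\tau_A]$. Let $\mathcal{A}(\alpha)$ be the set of sequences $A=(A_t)_{t\ge0}$ of subsets of $\mathbb{Z}_n$ with $\pi(A_t)\ge\alpha$ for all $t$; for such $A$ let $\tau_A=\inf\{t\ge0:X_t\in A_t\}$ and $t_{\mathrm{mov}}(\alpha)=\sup_{x,\,A\in\mathcal{A}(\alpha)}\mathbb{E}_x[\tau_A]$. *)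

From HB Require Import structures.
From mathcomp Require Import all_boot all_order all_algebra.
From mathcomp Require Import all_classical all_reals.
From mathcomp Require Import ereal topology normedtype sequences.
Set Implicit Arguments. Unset Strict Implicit. Unset Printing Implicit Defensive.
Import Order.TTheory GRing.Theory Num.Theory.
Local Open Scope ring_scope.

Section LazyCycle.
Variables (R : realType) (n : nat).

Definition cyc_succ (z : 'I_n) : nat := (z.+1 %% n)%N.
Definition cyc_pred (z : 'I_n) : nat := ((z + n).-1 %% n)%N.

(* transition kernel: stay w.p. 1/2, move to z+1 or z-1 (mod n) w.p. 1/4 each
   (indicators are added, so coinciding targets for n = 1, 2 are handled) *)
Definition lazyP (z y : 'I_n) : R :=
  (z == y)%:R / 2 + (cyc_succ z == y)%:R / 4 + (cyc_pred z == y)%:R / 4.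

Definition piU (A : {set 'I_n}) : R := #|A|%:R / n%:R.

(* sub-probability vector of the chain started at x, killed upon
   hitting the moving target: q t y = P_x(X_t = y, X_s \notin A_s for s <= t) *)
Fixpoint surv_vec (x : 'I_n) (A : nat -> {set 'I_n}) (t : nat) : 'I_n -> R :=
  match t with
  | 0 => fun y => ((y == x) && (y \notin A 0%N))%:R
  | t'.+1 => fun y => (y \notin A t)%:R *
                      \sum_(z : 'I_n) surv_vec x A t' z * lazyP z y
  end.

Definition surv_prob (x : 'I_n) (A : nat -> {set 'I_n}) (t : nat) : R :=
  \sum_(y : 'I_n) surv_vec x A t y.

(* E_x[tau_A] = \sum_{t >= 0} P_x(tau_A > t)  (in the extended reals) *)
Definition exp_hit (x : 'I_n) (A : nat -> {set 'I_n}) : \bar R :=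
  limn (fun N : nat => (\sum_(0 <= t < N) (surv_prob x A t)%:E)%E).

Definition t_H (alpha : R) : \bar R :=
  ereal_sup [set e | exists (x : 'I_n) (A : {set 'I_n}),
                       alpha <= piU A /\ e = exp_hit x (fun _ => A)].

Definition t_mov (alpha : R) : \bar R :=
  ereal_sup [set e | exists (x : 'I_n) (A : nat -> {set 'I_n}),
                       (forall t, alpha <= piU (A t)) /\ e = exp_hit x A].

End LazyCycle.

(* Admissibility [alpha <= piU A] amounts to [#|~: A| <= m] for a threshold [m < n].
   Upper bound: let [q_t] be the sub-probability vector of the chain killed on the
   moving target and [T_l q] the sum of the [l] largest entries of [q].  In one lazy
   step a set of [t] points receives at most [(T_(t-2) + 2 T_t + T_(t+2) - [t = 1] T_1)/4]
   of the mass of [q].  Writing [m = b + 2K] with [b = m mod 2], the potential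
   [Phi q = \sum_(j <= K) (b + 2j) T_(b+2j) q] thus drops by at least [|q_t|/2] per step, so
   [E tau = \sum_t |q_t| <= 2 Phi q_0 <= 2 (K+1)(K+b)].
   Lower bound: for the static target [{m, ..., n-1}] the function [y |-> 2 (y+1)(m-y)]
   is harmonic for the killed chain, hence is the expected hitting time from [y]; at
   [y = K] it equals [2 (K+1)(K+b)]. *)

From mathcomp Require Import all_boot all_order all_algebra zify ring lra.
From mathcomp Require Import all_classical all_reals.
From mathcomp Require Import ereal topology normedtype sequences.
Set Implicit Arguments. Unset Strict Implicit. Unset Printing Implicit Defensive.
Import Order.TTheory GRing.Theory Num.Theory.

Section CycleSets.
Variable n : nat.
Implicit Types (C D Q : {set 'I_n}).

Lemma val_iter_ordS (y : 'I_n) k : val (iter k (@ordS n) y) = (y + k) %% n.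
Proof.
elim: k => [|k IH] /=; first by rewrite addn0 modn_small.
by rewrite IH addnS -addn1 modnDml addn1.
Qed.

Lemma ordS_closed_setT C y : y \in C -> {homo (@ordS n) : x / x \in C} -> C = [set: 'I_n].
Proof.
move=> yC closedC; apply/setP => z; rewrite inE.
have -> : z = iter (z + n - y) (@ordS n) y.
  apply/val_inj; rewrite val_iter_ordS.
  have := ltn_ord y; have := ltn_ord z => hz hy.
  by rewrite (_ : y + (z + n - y) = z + n) ?modnDr ?modn_small //; lia.
by elim: (z + n - y) => //= k; apply: closedC.
Qed.

Lemma ord_pred_closed_setT C y : y \in C -> {homo (@ord_pred n) : x / x \in C} ->
  C = [set: 'I_n].
Proof.
move=> yC closedC; apply/setP => z; rewrite inE; apply/negPn/negP => zC.
suff /setP/(_ y) : ~: C = [set: 'I_n] by rewrite !inE yC.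
apply: (ordS_closed_setT (y := z)); first by rewrite inE.
move=> x; rewrite !inE; apply: contra => SxC.
by rewrite -(ordSK x); apply: closedC.
Qed.

Lemma exists_exit C : 0 < #|C| < n -> exists2 a, a \in C & ordS a \notin C.
Proof.
move=> /andP[/card_gt0P[y yC] Cn].
have [/existsP[a /andP[aC Sa]]|/existsPn noexit] :=
  boolP [exists a, (a \in C) && (ordS a \notin C)]; first by exists a.
suff CT : C = [set: 'I_n] by move: Cn; rewrite CT cardsT card_ord ltnn.
apply: (ordS_closed_setT yC) => x xC.
by move: (noexit x); rewrite xC negbK.
Qed.

Lemma exists_entry C : 0 < #|C| < n -> exists2 b, b \in C & ord_pred b \notin C.
Proof.
move=> /andP[C0 Cn]; have := cardsC C; rewrite card_ord => cardC.
have [a aC Sa] : exists2 a, a \in ~: C & ordS a \notin ~: C.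
  by apply: exists_exit; apply/andP; split; lia.
by exists (ordS a); rewrite ?ordSK; move: aC Sa; rewrite !inE // negbK.
Qed.

Definition cycle_interior C := [set x in C | (ordS x \in C) && (ord_pred x \in C)].

(* A proper subset of the cycle with at least two points has a right endpoint
   [a] and a distinct left endpoint [b], neither of which is interior. *)
Lemma card_cycle_interior C : 2 <= #|C| < n -> #|cycle_interior C| <= #|C| - 2.
Proof.
move=> /andP[C2 Cn].
have [b bC Pb] : exists2 b, b \in C & ord_pred b \notin C.
  by apply: exists_entry; apply/andP; split; lia.
have cardCb : #|C| = #|C :\ b|.+1 by rewrite (cardsD1 b C) bC.
have [a aCb SaCb] : exists2 a, a \in C :\ b & ordS a \notin C :\ b.
  apply: exists_exit; apply/andP; split; lia.
move: aCb; rewrite !inE => /andP[ab aC].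
have Sa : ordS a \notin C.
  move: SaCb; rewrite !inE negb_and negbK => /orP[/eqP Sab|//].
  by move: Pb; rewrite -Sab ordSK aC.
have : cycle_interior C \subset C :\ b :\ a.
  apply/fintype.subsetP => x; rewrite !inE => /and3P[xC Sx Px]; rewrite xC andbT.
  by apply/andP; split; apply: contraTneq isT => ex;
    [move: Sx; rewrite ex (negbTE Sa) | move: Px; rewrite ex (negbTE Pb)].
move/subset_leq_card; rewrite (cardsD1 a (C :\ b)) !inE ab aC in cardCb; lia.
Qed.

Lemma sum_mem_card Q D : \sum_(x in Q) (x \in D) = #|Q :&: D|.
Proof.
rewrite -sum1_card big_mkcond [RHS]big_mkcond /=; apply: eq_bigr => x _.
by rewrite inE; case: (x \in Q); case: (x \in D).
Qed.

Lemma subset_of_card_setI Q D : #|Q :&: D| = #|Q| -> Q \subset D.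
Proof. by move=> h; apply/finset.setIidPl/eqP; rewrite eqEcard subsetIl h leqnn. Qed.

(* [lazy_count C x] is [4 * lazyP x C]: the number of quarter-steps from [x] into [C]. *)
Definition lazy_count C x : nat := 2 * (x \in C) + (ordS x \in C) + (ord_pred x \in C).

Lemma sum_lazy_count C Q : \sum_(x in Q) lazy_count C x =
  2 * #|Q :&: C| + #|Q :&: @ordS n @^-1: C| + #|Q :&: @ord_pred n @^-1: C|.
Proof.
rewrite !big_split /= -!sum_mem_card big_distrr /=.
congr (_ + _ + _); last 2 first.
- by apply: eq_bigr => x _; rewrite inE.
- by apply: eq_bigr => x _; rewrite inE.
by rewrite big1_eq addn0 -big_split; apply: eq_bigr => x _; case: (x \in C).
Qed.

Lemma lazy_count_arith t u s :
  s <= 4 * minn u t ->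
  (u = t - 1 -> 2 <= t -> s < 4 * u) ->
  (u = t -> 0 < t -> s <= 4 * t - 2) ->
  (u = t + 1 -> 0 < t -> s < 4 * t) ->
  s + (t == 1) * minn u 1 <= minn u (t - 2) + 2 * minn u t + minn u (t + 2).
Proof. lia. Qed.

(* Equality holds when [C] is an arc and [Q] a concentric arc: the counts are [4] at the
   interior points of [C], [3] at its two endpoints and [1] at its two outer neighbours. *)
Lemma sum_lazy_count_le C Q : #|C| < n -> #|Q| < n ->
  \sum_(x in Q) lazy_count C x + (#|C| == 1) * minn #|Q| 1 <=
  minn #|Q| (#|C| - 2) + 2 * minn #|Q| #|C| + minn #|Q| (#|C| + 2).
Proof.
move=> Cn Qn; rewrite sum_lazy_count.
have cardS : #|@ordS n @^-1: C| = #|C| by rewrite card_preimset //; apply: can_inj (@ordSK n).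
have cardP : #|@ord_pred n @^-1: C| = #|C|.
  by rewrite card_preimset //; apply: can_inj (@ord_predK n).
have capQ D : #|D| = #|C| -> #|Q :&: D| <= minn #|Q| #|C|.
  by move=> <-; rewrite leq_min !subset_leq_card ?subsetIl ?subsetIr.
have := capQ C erefl; have := capQ _ cardS; have := capQ _ cardP => hc hb ha.
apply: lazy_count_arith; first by lia.
- move=> hQ C2; rewrite ltnNge; apply/negP => full.
  have QC : Q \subset C by apply: subset_of_card_setI; lia.
  have QSC : Q \subset @ordS n @^-1: C by apply: subset_of_card_setI; lia.
  have QPC : Q \subset @ord_pred n @^-1: C by apply: subset_of_card_setI; lia.
  have : Q \subset cycle_interior C.
    apply/fintype.subsetP => x xQ; move: (fintype.subsetP QSC x xQ) (fintype.subsetP QPC x xQ).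
    by rewrite !inE (fintype.subsetP QC) // => -> ->.
  by move/subset_leq_card; have := card_cycle_interior (C := C); rewrite C2 Cn; lia.
- move=> hQ C0; suff : #|Q :&: C| < #|C| \/ #|Q :&: @ordS n @^-1: C| < #|C| /\
                       #|Q :&: @ord_pred n @^-1: C| < #|C| by lia.
  case: (ltngtP #|Q :&: C| #|C|) => hQC; [by left| |].
  + by have := subset_leq_card (subsetIr Q C); lia.
  + have QC : Q = C by apply/eqP; rewrite eqEcard subset_of_card_setI ?hQ //= hQ.
    subst Q; right.
    have /card_gt0P[y yC] := C0.
    have notT : C != [set: 'I_n] by apply: contraTneq Cn => ->; rewrite cardsT card_ord ltnn.
    have lt D : #|C :&: D| != #|C| -> #|C :&: D| < #|C|.
      by rewrite ltn_neqAle subset_leq_card ?subsetIl // andbT.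
    split; apply: lt; apply: contra notT => /eqP/subset_of_card_setI closedC; apply/eqP.
    * by apply: (ordS_closed_setT yC) => x /(fintype.subsetP closedC); rewrite inE.
    * by apply: (ord_pred_closed_setT yC) => x /(fintype.subsetP closedC); rewrite inE.
- move=> hQ C0; rewrite ltnNge; apply/negP => full.
  have sub D : #|Q :&: D| = #|C| -> #|D| = #|C| -> D \subset Q.
    by move=> hD hDC; rewrite finset.setIC -hDC in hD; apply: subset_of_card_setI.
  have CQ : C \subset Q by apply: sub; lia.
  have SCQ : @ordS n @^-1: C \subset Q by apply: sub => //; lia.
  have PCQ : @ord_pred n @^-1: C \subset Q by apply: sub => //; lia.
  have : ~: Q \subset cycle_interior (~: C).
    apply/fintype.subsetP => x; rewrite !inE => xQ; apply/and3P; split.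
    + by apply: contra xQ => /(fintype.subsetP CQ).
    + by apply: contra xQ => xC; apply: (fintype.subsetP SCQ); rewrite inE.
    + by apply: contra xQ => xC; apply: (fintype.subsetP PCQ); rewrite inE.
  move/subset_leq_card; have := cardsC C; have := cardsC Q; rewrite card_ord => cQ cC.
  have : #|cycle_interior (~: C)| <= #|~: C| - 2.
    by apply: card_cycle_interior; apply/andP; split; lia.
  lia.
Qed.

End CycleSets.

Local Open Scope ring_scope.

Lemma summation_by_parts (R : comPzRingType) (u v : nat -> R) N :
  \sum_(0 <= i < N) u i * v i = \sum_(0 <= i < N) (u i - u i.+1) * \sum_(0 <= k < i.+1) v k
                                 + u N * \sum_(0 <= k < N) v k.
Proof.
elim: N => [|N IH]; first by rewrite !big_geq // mulr0 addr0.
by rewrite !big_nat_recr //= IH; ring.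
Qed.

Lemma abel_le (R : numDomainType) (a c g : nat -> R) N :
  (forall i, (i < N)%N -> a i.+1 <= a i) -> 0 <= a N ->
  (forall k, (k <= N)%N -> \sum_(0 <= j < k) c j <= \sum_(0 <= j < k) g j) ->
  \sum_(0 <= i < N) a i * c i <= \sum_(0 <= i < N) a i * g i.
Proof.
move=> a_nonincr aN0 partial; rewrite -subr_ge0 -sumrB.
under eq_bigr do rewrite -mulrBr.
rewrite summation_by_parts; apply: addr_ge0; last first.
  by apply: mulr_ge0 => //; rewrite sumrB subr_ge0 partial.
rewrite big_nat_cond; apply: sumr_ge0 => i /andP[/andP[_ iN] _].
by apply: mulr_ge0; rewrite ?subr_ge0 ?a_nonincr // sumrB subr_ge0 partial.
Qed.

Lemma sum_ind_lt (R : pzSemiRingType) k l :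
  \sum_(0 <= j < k) ((j < l)%N%:R : R) = (minn k l)%:R.
Proof.
elim: k => [|k IH]; first by rewrite big_geq // min0n.
by rewrite big_nat_recr //= IH -natrD; congr (_%:R); case: (ltnP k l) => h; lia.
Qed.

Lemma sum_ind_lt_mul (R : pzSemiRingType) (f : nat -> R) k N : (k <= N)%N ->
  \sum_(0 <= j < N) (j < k)%N%:R * f j = \sum_(0 <= j < k) f j.
Proof.
move=> kN; rewrite (big_nat_widen 0 k N) // big_mkcondr /=.
by apply: eq_bigr => j _; case: (j < k)%N; rewrite ?mul1r ?mul0r.
Qed.

Section TopSums.
Variables (R : realDomainType) (n' : nat).
Local Notation n := n'.+1.
Implicit Types (q : 'I_n -> R).

Definition desc q := sort (fun x y => q y <= q x) (enum 'I_n).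

(* [nth_largest q i] is the [i]-th largest value of [q], and [0] once [i >= n]. *)
Definition nth_largest q i := if (i < n)%N then q (nth ord0 (desc q) i) else 0.

Definition topset q l := [set x | (index x (desc q) < l)%N].

Definition topsum q l := \sum_(x in topset q l) q x.

Lemma size_desc q : size (desc q) = n.
Proof. by rewrite size_sort size_enum_ord. Qed.

Lemma index_nth_desc q i : (i < n)%N -> index (nth ord0 (desc q) i) (desc q) = i.
Proof. by move=> i_lt; rewrite index_uniq ?sort_uniq ?enum_uniq ?size_desc. Qed.

Lemma desc_nonincr q i j : (i <= j < n)%N ->
  q (nth ord0 (desc q) j) <= q (nth ord0 (desc q) i).
Proof.
move=> /andP[ij jn].
have sorted_desc : sorted (fun x y => q y <= q x) (desc q).
  by apply: sort_sorted => x y; apply: le_total.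
have desc_trans : transitive (fun x y => q y <= q x).
  by move=> y x z /= h1 h2; apply: le_trans h2 h1.
by apply: (sorted_leq_nth desc_trans _ ord0 sorted_desc); rewrite ?inE ?size_desc //; lia.
Qed.

Lemma sum_desc q (F : 'I_n -> R) :
  \sum_x F x = \sum_(0 <= i < n) F (nth ord0 (desc q) i).
Proof.
have -> : \sum_(0 <= i < n) F (nth ord0 (desc q) i) =
          \sum_(0 <= i < size (desc q)) F (nth ord0 (desc q) i) by rewrite size_desc.
have desc_perm : perm_eq (desc q) (enum 'I_n) by rewrite perm_sort.
rewrite -(big_nth ord0 xpredT F) (perm_big _ desc_perm) /= big_enum.
by apply: eq_bigl => x; rewrite inE.
Qed.

Lemma sum_topset q (F : 'I_n -> R) l : \sum_(x in topset q l) F x =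
  \sum_(0 <= i < n) (i < l)%N%:R * F (nth ord0 (desc q) i).
Proof.
rewrite big_mkcond (sum_desc q) /= big_nat_cond [RHS]big_nat_cond.
apply: eq_bigr => i /andP[/andP[_ i_lt] _]; rewrite inE index_nth_desc //.
by case: (i < l)%N; rewrite ?mul1r ?mul0r.
Qed.

Lemma card_topset q l : #|topset q l| = minn n l.
Proof.
apply/eqP; rewrite -(eqr_nat R) -sum1_card natr_sum sum_topset -sum_ind_lt.
by under eq_bigr do rewrite mulr1.
Qed.

Lemma topsumE q l : topsum q l = \sum_(0 <= i < n) (i < l)%N%:R * nth_largest q i.
Proof.
rewrite /topsum sum_topset big_nat_cond [RHS]big_nat_cond.
by apply: eq_bigr => i /andP[/andP[_ i_lt] _]; rewrite /nth_largest i_lt.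
Qed.

Section Nonneg.
Variable q : 'I_n -> R.
Hypothesis q_ge0 : forall x, 0 <= q x.

Lemma nth_largest_ge0 i : 0 <= nth_largest q i.
Proof. by rewrite /nth_largest; case: ifP. Qed.

Lemma nth_largest_nonincr i : nth_largest q i.+1 <= nth_largest q i.
Proof.
rewrite /nth_largest; case: (ltnP i.+1 n) => [iSn|_]; last by case: ifP.
by rewrite (ltnW iSn) desc_nonincr // leqnSn.
Qed.

(* Otherwise the [i+1] largest values of [q] would all lie in [S]. *)
Lemma nth_largest_eq0 (S : {set 'I_n}) i :
  (forall x, x \notin S -> q x = 0) -> (#|S| <= i)%N -> nth_largest q i = 0.
Proof.
move=> q_supp Si; rewrite /nth_largest; case: ifP => // i_lt.
apply/le_anti; rewrite q_ge0 andbT leNgt; apply/negP => pos.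
suff : (#|topset q i.+1| <= #|S|)%N by rewrite card_topset; lia.
apply/subset_leq_card/fintype.subsetP => x; rewrite inE => x_top; apply/negPn/negP => xS.
have /(desc_nonincr q) : (index x (desc q) <= i < n)%N by lia.
by rewrite nth_index ?mem_sort ?mem_enum // (q_supp x xS) leNgt pos.
Qed.

Lemma topsum_ge0 l : 0 <= topsum q l.
Proof. exact: sumr_ge0. Qed.

Lemma topsum_le_sum l : topsum q l <= \sum_x q x.
Proof.
rewrite /topsum big_mkcond /=; apply: ler_sum => x _.
by case: (x \in topset q l).
Qed.

Lemma topsum_full (S : {set 'I_n}) l : (forall x, x \notin S -> q x = 0) ->
  (#|S| <= l)%N -> topsum q l = \sum_x q x.
Proof.
move=> q_supp Sl; rewrite topsumE (sum_desc q) big_nat_cond [RHS]big_nat_cond.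
apply: eq_bigr => i /andP[/andP[_ i_lt] _].
case: (ltnP i l) => il; first by rewrite mul1r /nth_largest i_lt.
have := nth_largest_eq0 q_supp (leq_trans Sl il).
by rewrite mul0r /nth_largest i_lt => ->.
Qed.

End Nonneg.

(* Summation by parts against the nonincreasing sequence [nth_largest q] reduces the
   bound to its partial sums, which are the counting inequality
   [sum_lazy_count_le] applied to the [k] largest states of [q]. *)
Lemma sum_mul_lazy_count_le q (C : {set 'I_n}) z :
  (forall x, 0 <= q x) -> q z = 0 -> (#|C| < n)%N ->
  \sum_x q x * (lazy_count C x)%:R <=
  topsum q (#|C| - 2) + 2 * topsum q #|C| + topsum q (#|C| + 2)
  - (#|C| == 1)%:R * topsum q 1.
Proof.
move=> q_ge0 qz Cn; set t := #|C|.
pose c i : R := (lazy_count C (nth ord0 (desc q) i))%:R.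
pose g i : R := (i < t - 2)%N%:R + 2 * (i < t)%N%:R + (i < t + 2)%N%:R
                - (t == 1)%:R * (i < 1)%N%:R.
have largest_last : nth_largest q n' = 0.
  apply: (nth_largest_eq0 q_ge0 (S := [set~ z])); last by rewrite cardsC1 card_ord.
  by move=> x; rewrite !inE negbK => /eqP ->.
have -> : \sum_x q x * (lazy_count C x)%:R = \sum_(0 <= i < n') nth_largest q i * c i.
  rewrite (sum_desc q) big_nat_recr //=.
  have -> : q (nth ord0 (desc q) n') = 0 by rewrite -largest_last /nth_largest ltnSn.
  rewrite mul0r addr0 big_nat_cond [RHS]big_nat_cond.
  apply: eq_bigr => i /andP[/andP[_ i_lt] _].
  have i_n : (i < n)%N by lia.
  by rewrite /nth_largest i_n.
have -> : topsum q (t - 2) + 2 * topsum q t + topsum q (t + 2) - (t == 1)%:R * topsum q 1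
          = \sum_(0 <= i < n') nth_largest q i * g i.
  rewrite !topsumE !big_nat_recr //= largest_last !mulr0 !addr0.
  rewrite !mulr_sumr -!big_split -sumrB /=; apply: eq_bigr => i _.
  by rewrite /g; ring.
apply: abel_le => [i _||k kn']; [exact: nth_largest_nonincr|exact: nth_largest_ge0|].
have card_top : #|topset q k| = k by rewrite card_topset; lia.
have := @sum_lazy_count_le n C (topset q k) Cn; rewrite card_top => /(_ ltac:(lia)).
rewrite -(ler_nat R) !natrD !natrM.
have -> : \sum_(0 <= j < k) c j = (\sum_(x in topset q k) lazy_count C x)%:R.
  by rewrite natr_sum sum_topset sum_ind_lt_mul //; lia.
have -> : \sum_(0 <= j < k) g j = (minn k (t - 2))%:R + 2 * (minn k t)%:R
          + (minn k (t + 2))%:R - (t == 1)%:R * (minn k 1)%:R.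
  by rewrite /g sumrB !big_split /= -!mulr_sumr !sum_ind_lt.
lra.
Qed.

End TopSums.

Section LazyKernel.
Variables (R : realType) (n : nat).

Lemma sum_delta_mul (a : 'I_n) (f : 'I_n -> R) : \sum_y (a == y)%:R * f y = f a.
Proof.
rewrite (bigD1 a) //= eqxx mul1r big1 ?addr0 // => y ya.
by rewrite eq_sym (negbTE ya) mul0r.
Qed.

Lemma lazyPE (z y : 'I_n) :
  lazyP R z y = (z == y)%:R / 2 + (ordS z == y)%:R / 4 + (ord_pred z == y)%:R / 4.
Proof. by []. Qed.

Lemma lazyP_ge0 (z y : 'I_n) : 0 <= lazyP R z y.
Proof. by rewrite lazyPE !addr_ge0 ?divr_ge0. Qed.

Lemma sum_lazyP_mul (z : 'I_n) (f : 'I_n -> R) :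
  \sum_y lazyP R z y * f y = f z / 2 + f (ordS z) / 4 + f (ord_pred z) / 4.
Proof.
under eq_bigr => y _ do rewrite lazyPE !mulrDl !(mulrAC _ _ (f y)).
by rewrite !big_split /= -!mulr_suml !sum_delta_mul.
Qed.

Lemma sum_lazyP (z : 'I_n) : \sum_y lazyP R z y = 1.
Proof.
have := sum_lazyP_mul z (fun _ => 1); under eq_bigr do rewrite mulr1.
by move=> ->; lra.
Qed.

Lemma sum_lazyP_set (z : 'I_n) (C : {set 'I_n}) :
  \sum_(y in C) lazyP R z y = (lazy_count C z)%:R / 4.
Proof.
rewrite big_mkcond /= (eq_bigr (fun y => lazyP R z y * (y \in C)%:R)); last first.
  by move=> y _; case: (y \in C); rewrite ?mulr1 ?mulr0.
by rewrite sum_lazyP_mul /lazy_count !natrD; lra.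
Qed.

End LazyKernel.

Section Survival.
Variables (R : realType) (n : nat) (x : 'I_n) (A : nat -> {set 'I_n}).
Local Notation q := (surv_vec R x A).

Lemma surv_vec_ge0 t y : 0 <= q t y.
Proof.
elim: t y => [|t IH] y /=; first by case: (_ && _).
by rewrite mulr_ge0 // sumr_ge0 // => z _; rewrite mulr_ge0 ?lazyP_ge0.
Qed.

Lemma surv_vec_target t y : y \in A t -> q t y = 0.
Proof. by case: t => [|t] /= ->; rewrite ?andbF ?mul0r. Qed.

Lemma surv_vec_succ_le t y : q t.+1 y <= \sum_z q t z * lazyP R z y.
Proof.
rewrite /=; case: (y \in A t.+1); rewrite ?mul0r ?mul1r //.
by rewrite sumr_ge0 // => z _; rewrite mulr_ge0 ?surv_vec_ge0 ?lazyP_ge0.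
Qed.

Lemma sum_surv_vec_set_le t (C : {set 'I_n}) :
  \sum_(y in C) q t.+1 y <= \sum_z q t z * (lazy_count C z)%:R / 4.
Proof.
apply: le_trans (ler_sum _ (fun y _ => surv_vec_succ_le t y)) _.
rewrite exchange_big /=; apply: ler_sum => z _.
by rewrite -mulr_sumr sum_lazyP_set mulrA.
Qed.

Lemma surv_prob_ge0 t : 0 <= surv_prob R x A t.
Proof. exact: sumr_ge0 (fun y _ => surv_vec_ge0 t y). Qed.

Lemma surv_prob_succ_le t : surv_prob R x A t.+1 <= surv_prob R x A t.
Proof.
apply: le_trans (ler_sum _ (fun y _ => surv_vec_succ_le t y)) _.
rewrite exchange_big /=; apply: ler_sum => z _.
by rewrite -mulr_sumr sum_lazyP mulr1.
Qed.

Lemma surv_prob0_le1 : surv_prob R x A 0 <= 1.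
Proof.
rewrite -(sum_delta_mul x (fun _ => 1)); apply: ler_sum => y _ /=.
by rewrite mulr1 eq_sym; case: (x == y); case: (y \in A 0%N); rewrite /= ?ler_nat.
Qed.

End Survival.

Lemma exp_hit_le (R : realType) n (x : 'I_n) (A : nat -> {set 'I_n}) (w : R) :
  (forall N, \sum_(0 <= t < N) surv_prob R x A t <= w) -> (exp_hit R x A <= w%:E)%E.
Proof.
move=> partial; apply: lime_le.
  by apply: is_cvg_nneseries => t _ _; rewrite lee_fin surv_prob_ge0.
by apply: nearW => N; rewrite sumEFin lee_fin.
Qed.

(* Expected time for the walk started at [y < m] to leave [{0, ..., m-1}] (gambler's ruin). *)
Definition interval_hit (R : realType) (m y : nat) : R := 2 * (y.+1 * (m - y))%:R.

Lemma sum_arith_progression (b K : nat) :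
  (\sum_(0 <= j < K.+1) (b + 2 * j) = K.+1 * (b + K))%N.
Proof.
elim: K => [|K IH]; first by rewrite big_nat1 muln0 !addn0 mul1n.
by rewrite big_nat_recr //= IH; lia.
Qed.

Section Potential.
Variables (R : realType) (n' : nat).
Local Notation n := n'.+1.
Implicit Types (q : 'I_n -> R).

Definition potential (b K : nat) q :=
  \sum_(0 <= j < K.+1) (b + 2 * j)%:R * topsum q (b + 2 * j).

Lemma potential_ge0 b K q : (forall x, 0 <= q x) -> 0 <= potential b K q.
Proof. by move=> q_ge0; rewrite sumr_ge0 // => j _; rewrite mulr_ge0 ?topsum_ge0. Qed.

Lemma potential_le b K q : (forall x, 0 <= q x) -> \sum_x q x <= 1 ->
  potential b K q <= (K.+1 * (b + K))%:R.
Proof.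
move=> q_ge0 q_le1; rewrite -sum_arith_progression natr_sum.
apply: ler_sum => j _; rewrite -[leRHS]mulr1 ler_wpM2l //.
exact: le_trans (topsum_le_sum q_ge0 _) q_le1.
Qed.

(* The weights [b + 2 j], [b <= 2], are chosen so that the second differences of the
   bound of [sum_mul_lazy_count_le] telescope. *)
Lemma telescope_weights (T : nat -> R) (b K : nat) : (b <= 2)%N -> T 0%N = 0 ->
  \sum_(0 <= j < K.+1) (b + 2 * j)%:R * (T (b + 2 * j - 2)%N + 2 * T (b + 2 * j)%N
      + T (b + 2 * j + 2)%N - (b + 2 * j == 1)%:R * T 1%N)
  = 4 * \sum_(0 <= j < K.+1) (b + 2 * j)%:R * T (b + 2 * j)%N
    - ((b + 2 * K)%:R + 2) * T (b + 2 * K)%N + (b + 2 * K)%:R * T (b + 2 * K + 2)%N.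
Proof.
move=> b2 T0; elim: K => [|K IH].
  rewrite !big_nat1 !muln0 !addn0.
  by case: b b2 => [|[|[|]]] //= _; rewrite ?T0; lra.
rewrite big_nat_recr //= IH [X in _ = 4 * X - _ + _]big_nat_recr //=.
rewrite (_ : (b + 2 * K.+1 == 1)%N = false); last by lia.
have -> : (b + 2 * K.+1 - 2 = b + 2 * K)%N by lia.
have -> : (b + 2 * K.+1 = b + 2 * K + 2)%N by lia.
rewrite (natrD _ (b + 2 * K) 2) /=; ring.
Qed.

Lemma potential_step (q q' : 'I_n -> R) (b K : nat) (S : {set 'I_n}) :
  (b <= 2)%N -> (b + 2 * K < n)%N ->
  (forall x, 0 <= q x) -> (forall x, x \notin S -> q x = 0) -> (#|S| <= b + 2 * K)%N ->
  (forall C : {set 'I_n}, \sum_(y in C) q' y <= \sum_z q z * (lazy_count C z)%:R / 4) ->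
  potential b K q' + (\sum_x q x) / 2 <= potential b K q.
Proof.
move=> b2 bKn q_ge0 q_supp Sm q'_le.
have /card_gt0P[z] : (0 < #|~: S|)%N by have := cardsC S; rewrite card_ord; lia.
rewrite inE => zS.
have topsum0 : topsum q 0 = 0 by rewrite /topsum big_pred0 // => x; rewrite inE.
have bound_term j : (j < K.+1)%N -> topsum q' (b + 2 * j) <=
    (topsum q (b + 2 * j - 2) + 2 * topsum q (b + 2 * j) + topsum q (b + 2 * j + 2)
     - (b + 2 * j == 1)%:R * topsum q 1) / 4.
  move=> jK; have topn : (b + 2 * j <= n)%N by lia.
  apply: le_trans (q'_le _) _; rewrite -mulr_suml ler_pM2r //.
  have := sum_mul_lazy_count_le (C := topset q' (b + 2 * j)) q_ge0 (q_supp z zS).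
  by rewrite card_topset (_ : minn n _ = b + 2 * j)%N; [apply; lia|lia].
have sum_bound : potential b K q' <= \sum_(0 <= j < K.+1) (b + 2 * j)%:R *
    ((topsum q (b + 2 * j - 2) + 2 * topsum q (b + 2 * j) + topsum q (b + 2 * j + 2)
     - (b + 2 * j == 1)%:R * topsum q 1) / 4).
  rewrite /potential big_nat_cond [leRHS]big_nat_cond.
  by apply: ler_sum => j /andP[/andP[_ jK] _]; rewrite ler_wpM2l ?bound_term.
apply: le_trans (lerD sum_bound (lexx _)) _.
under eq_bigr do rewrite mulrA.
rewrite -mulr_suml telescope_weights //.
rewrite (topsum_full q_ge0 q_supp Sm).
rewrite (topsum_full q_ge0 q_supp (leq_trans Sm (leq_addr 2 _))).
rewrite /potential; lra.
Qed.

Lemma sum_surv_prob_le x (A : nat -> {set 'I_n}) (m : nat) : (m < n)%N ->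
  (forall t, #|~: A t| <= m)%N ->
  forall N, \sum_(0 <= t < N) surv_prob R x A t <= interval_hit R m m./2.
Proof.
move=> mn hA N; set b := odd m; set K := m./2.
have mE : m = (b + 2 * K)%N by rewrite /b /K -{1}(odd_double_half m) mul2n.
have step t : potential b K (surv_vec R x A t.+1) + surv_prob R x A t / 2 <=
              potential b K (surv_vec R x A t).
  apply: (potential_step (S := ~: A t)); rewrite -?mE //.
  - by rewrite /b; case: (odd m).
  - exact: surv_vec_ge0.
  - by move=> y; rewrite inE negbK; apply: surv_vec_target.
  - exact: sum_surv_vec_set_le.
have telescoped : \sum_(0 <= t < N) surv_prob R x A t / 2
    + potential b K (surv_vec R x A N) <= potential b K (surv_vec R x A 0).
  elim: N => [|N IH]; first by rewrite big_geq // add0r.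
  by rewrite big_nat_recr //=; have := step N; lra.
have := potential_ge0 b K (@surv_vec_ge0 R _ x A N).
have := potential_le b K (@surv_vec_ge0 R _ x A 0) (@surv_prob0_le1 R _ x A).
rewrite /interval_hit (_ : m - K = b + K)%N; last by rewrite mE; lia.
by move: telescoped; rewrite -mulr_suml; lra.
Qed.

End Potential.

Lemma le_of_forall_le_add_div (R : archiRealFieldType) (v r c : R) :
  (forall N : nat, v <= r + c / N.+1%:R) -> v <= r.
Proof.
move=> hN; apply/ler_addgt0Pr => e e0.
apply: le_trans (hN (Num.truncn (c / e))) _; rewrite lerD2l.
by rewrite ler_pdivrMr ?ltr0n // mulrC -ler_pdivrMr // ltW // truncnS_gt.
Qed.

Lemma exp_hit_ge (R : realType) n (x : 'I_n) (A : nat -> {set 'I_n}) (v c : R) :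
  (forall N, v <= \sum_(0 <= t < N) surv_prob R x A t + c / N.+1%:R) ->
  (v%:E <= exp_hit R x A)%E.
Proof.
move=> partial.
have partial_le N : ((\sum_(0 <= t < N) surv_prob R x A t)%:E <= exp_hit R x A)%E.
  rewrite /exp_hit -sumEFin; apply: nneseries_lim_ge => t _ _.
  by rewrite lee_fin surv_prob_ge0.
case E : (exp_hit R x A) => [r| |]; last 2 first.
- by rewrite leey.
- by have := partial_le 0%N; rewrite E big_geq.
rewrite lee_fin; apply: (@le_of_forall_le_add_div _ v r c) => N.
by apply: le_trans (partial N) _; rewrite lerD2r -lee_fin -E.
Qed.

Section IntervalTarget.
Variables (R : realType) (n' m : nat).
Local Notation n := n'.+1.
Local Notation h := (interval_hit R m).
Hypothesis mn : (m < n)%N.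

Definition interval_target : {set 'I_n} := [set y : 'I_n | (m <= y)%N].

Lemma card_setC_interval_target : (#|~: interval_target| <= m)%N.
Proof.
have sub : ~: interval_target \subset [set inord (val i) | i : 'I_m].
  apply/fintype.subsetP => y; rewrite !inE -ltnNge => ym.
  by apply/imsetP; exists (Ordinal ym); rewrite ?inE // inord_val.
by apply: leq_trans (subset_leq_card sub) _; rewrite (leq_trans (leq_imset_card _ _)) ?card_ord.
Qed.

Lemma interval_hit_ge0 y : 0 <= h y.
Proof. by rewrite /interval_hit mulr_ge0. Qed.

Lemma interval_hit_target y : (m <= y)%N -> h y = 0.
Proof. by move=> my; rewrite /interval_hit (_ : m - y = 0)%N ?muln0 ?mulr0 //; lia. Qed.

Lemma interval_hit_harmonic (z : 'I_n) : (z < m)%N ->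
  h z / 2 + h (ordS z) / 4 + h (ord_pred z) / 4 = h z - 1.
Proof.
move=> zm; have zn := ltn_ord z; set v := nat_of_ord z.
have [e me] : exists e, m = (v + 1 + e)%N by exists (m - v - 1)%N; lia.
have -> : h z = 2 * ((v + 1) * (e + 1))%N%:R.
  by rewrite /interval_hit -/v (_ : (m - v = e + 1)%N) ?addn1 //; lia.
have -> : h (ordS z) = 2 * ((v + 2) * e)%N%:R.
  rewrite /interval_hit /= modn_small; last by lia.
  by rewrite (_ : (m - v.+1 = e)%N) ?addn2 //; lia.
have -> : h (ord_pred z) = 2 * (v * (e + 2))%N%:R.
  rewrite /interval_hit /=; case: (posnP v) => v0.
    have -> : ((z + n).-1 %% n = n')%N by rewrite -/v v0 /= modn_small.
    by rewrite (_ : (m - n' = 0)%N) ?muln0 ?v0 ?mul0n //; lia.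
  have -> : ((z + n).-1 %% n = v.-1)%N.
    by rewrite -/v (_ : ((v + n).-1 = v.-1 + n)%N) ?modnDr ?modn_small //; lia.
  by rewrite (_ : v.-1.+1 = v)%N 1?(_ : m - v.-1 = e + 2)%N //; lia.
by rewrite !natrM !natrD; lra.
Qed.

Section Start.
Variable x : 'I_n.
Local Notation q := (surv_vec R x (fun _ => interval_target)).
Local Notation p := (surv_prob R x (fun _ => interval_target)).

Lemma surv_hit_step t : \sum_y q t.+1 y * h y + p t = \sum_y q t y * h y.
Proof.
have -> : \sum_y q t.+1 y * h y = \sum_y (\sum_z q t z * lazyP R z y) * h y.
  apply: eq_bigr => y _ /=; case: (boolP (y \in interval_target)) => yA /=.
    by rewrite interval_hit_target ?mulr0 //; move: yA; rewrite inE.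
  by rewrite mul1r.
have -> : \sum_y (\sum_z q t z * lazyP R z y) * h y = \sum_z q t z * (h z - 1).
  under eq_bigr do rewrite mulr_suml.
  rewrite exchange_big /=; apply: eq_bigr => z _.
  under eq_bigr do rewrite -mulrA.
  rewrite -mulr_sumr sum_lazyP_mul.
  case: (boolP (z \in interval_target)) => zA; first by rewrite surv_vec_target ?mul0r.
  by rewrite interval_hit_harmonic //; move: zA; rewrite inE -ltnNge.
by rewrite /surv_prob -big_split /=; apply: eq_bigr => z _; rewrite mulrBr mulr1 subrK.
Qed.

Lemma surv_hit_telescope N : \sum_(0 <= t < N) p t + \sum_y q N y * h y = h x.
Proof.
elim: N => [|N IH]; last by rewrite big_nat_recr //= -IH -(surv_hit_step N); lra.
rewrite big_geq // add0r -(sum_delta_mul x h); apply: eq_bigr => y _ /=.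
case: (eqVneq x y) => [<-|_]; last by rewrite /= ?mul0r.
rewrite /= inE; case: leqP => //= mx.
by rewrite interval_hit_target ?mulr0.
Qed.

(* The mass still alive at time [N] is at most [h x / (N+1)] because [p] is
   nonincreasing; hence the value [h x] is attained in the limit. *)
Lemma interval_hit_le_exp_hit : ((h x)%:E <= exp_hit R x (fun _ => interval_target))%E.
Proof.
set H := \sum_(y : 'I_n) h y.
apply: (@exp_hit_ge R n x _ (h x) (H * h x)) => N.
have rem_le : \sum_y q N y * h y <= H * p N.
  rewrite /surv_prob mulr_sumr; apply: ler_sum => y _; rewrite mulrC ler_wpM2r ?surv_vec_ge0 //.
  by rewrite /H (bigD1 y) //= lerDl sumr_ge0 // => z _; apply: interval_hit_ge0.
have mass_le : N.+1%:R * p N <= h x.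
  have p_nonincr := (nonincreasing_seqP p).1 (@surv_prob_succ_le R n x _).
  have rem_ge0 : 0 <= \sum_y q N.+1 y * h y.
    by rewrite sumr_ge0 // => y _; rewrite mulr_ge0 ?surv_vec_ge0 ?interval_hit_ge0.
  have -> : N.+1%:R * p N = \sum_(0 <= t < N.+1) p N by rewrite sumr_const_nat subn0 mulr_natl.
  rewrite -(surv_hit_telescope N.+1) -[leLHS]addr0 lerD //.
  by apply: ler_sum_nat => t /andP[_ tN]; apply: p_nonincr.
have H0 : 0 <= H by rewrite sumr_ge0 // => y _; apply: interval_hit_ge0.
rewrite -{1}(surv_hit_telescope N) lerD2l (le_trans rem_le) // -mulrA ler_wpM2l //.
by rewrite ler_pdivlMr ?ltr0n // mulrC.
Qed.

End Start.

End IntervalTarget.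

Lemma admissible_threshold (R : realType) (n : nat) (alpha : R) :
  (0 < n)%N -> 0 < alpha -> alpha <= 1 ->
  exists2 m, (m < n)%N & forall A : {set 'I_n}, (alpha <= piU R A) = (#|~: A| <= m)%N.
Proof.
move=> n0 alpha0 alpha1; have n0R : 0 < n%:R :> R by rewrite ltr0n.
have alpha_n : alpha <= n%:R / n%:R by rewrite divff ?gt_eqF.
have exP : exists k, alpha <= k%:R / n%:R by exists n.
case: (ex_minnP exP) => k alpha_k k_min; have kn := k_min n alpha_n.
exists (n - k)%N.
  suff : (0 < k)%N by lia.
  by rewrite lt0n; apply: contraTneq alpha_k => ->; rewrite mul0r -ltNge.
move=> A; have := cardsC A; rewrite card_ord => cardA.
apply/idP/idP => [/k_min|kA]; first by lia.
by rewrite /piU (le_trans alpha_k) // ler_pM2r ?invr_gt0 // ler_nat; lia.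
Qed.

Theorem corollary1p3 (R : realType) (n : nat) (hn : (1 <= n)%N) (alpha : R)
  (ha0 : 0 < alpha) (ha1 : alpha < 1) :
  t_H n alpha = t_mov n alpha.
Proof.
case: n hn => [//|n'] _.
have [m mn adm] := admissible_threshold (ltn0Sn n') ha0 (ltW ha1).
set x0 : 'I_n'.+1 := inord m./2.
have upper (x : 'I_n'.+1) (A : nat -> {set 'I_n'.+1}) :
    (forall t, alpha <= piU R (A t)) ->
    (exp_hit R x A <= (interval_hit R m m./2)%:E)%E.
  move=> hA; apply: exp_hit_le; apply: (sum_surv_prob_le R x mn) => t.
  by rewrite -adm.
have lower : ((interval_hit R m m./2)%:E <= exp_hit R x0 (fun _ => interval_target n' m))%E.
  by have := interval_hit_le_exp_hit R mn x0; rewrite inordK //; lia.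
apply/eqP; rewrite eq_le; apply/andP; split.
- by apply: ereal_sup_le => _ [x [A [hA ->]]]; exists x, (fun _ => A).
- apply: ge_ereal_sup => _ [x [A [hA ->]]].
  apply: le_trans (upper x A hA) (le_trans lower _).
  apply: ereal_sup_ubound; exists x0, (interval_target n' m).
  by rewrite adm card_setC_interval_target.
Qed.
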